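(* For any encoding-decoding functions $(f^{(n)},g^{(n)})$ such that \begin{align} \frac{1}{n}\log L&\leq R^{\mathrm{c}},~ \frac{1}{n}\log M\geq R^{\mathrm{i}}, \end{align} given any deterministic function $h^{(n)}$ and any distortion level $D$, we have \begin{align} \mathrm{P}_\mathrm{c}^{(n)}(f^{(n)},g^{(n)},h^{(n)},D) &\leq P_{W\mathbf{T}}\Bigg\{\bigcap_{i=1}^7\mathcal{A}_i(W)\Bigg\}+6e^{-n\eta}. \end{align}
   Context: Setting (content identification with lossy recovery): finite alphabets $\mathcal{X},\mathcal{Y},\mathcal{Z},\hat{\mathcal{X}}$, distortion $d$ with $d(x^n,\hat{x}^n)=\frac1n\sum_i d(x_i,\hat{x}_i)$. $M$ feature vectors $X^n(m)$ i.i.d. $P_X^n$; $Y^n(m)$ is the output of DMC $P_{Y|X}$ with input $X^n(m)$; $S(m)=f^{(n)}(Y^n(m))\in\{1,\ldots,L\}$ with deterministic $f^{(n)}$; $W$ uniform on $\{1,\ldots,M\}$ independent of all; $Z^n$ is the output of DMC $P_{Z|X}$ with input $X^n(W)$; $\hat{W}=g^{(n)}(S(1),\ldots,S(M),Z^n)$, with decoding regions $\mathcal{D}(s^M,w)=\{z^n:g^{(n)}(s^M,z^n)=w\}$; $\hat{X}^n=h^{(n)}(S(\hat{W}),Z^n)$. $\mathrm{P}_\mathrm{c}^{(n)}(f^{(n)},g^{(n)},h^{(n)},D)=\Pr\{\hat{W}=W,~d(X^n(W),\hat{X}^n)\leq D\}$. Let $\mathbf{t}=(x^n(1),\ldots,x^n(M),y^n(1),\ldots,y^n(M),s(1),\ldots,s(M),z^n,\hat{x}^n)$,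 and let $P_{W\mathbf{T}}$ be the joint distribution of $(W,\mathbf{T})$ with $\mathbf{T}=(X^n(1..M),Y^n(1..M),S(1..M),Z^n,\hat{X}^n)$, where (as a bound device) $\hat{X}^n$ is generated as $h^{(n)}(S(W),Z^n)$, i.e. $P_{W\mathbf{T}}(w,\mathbf{t})=\frac{1}{M}\prod_{m=1}^M P_X^n(x^n(m))P_{Y|X}^n(y^n(m)|x^n(m))1\{s(m)=f^{(n)}(y^n(m))\}\cdot P_{Z|X}^n(z^n|x^n(w))1\{\hat{x}^n=h^{(n)}(s(w),z^n)\}$. For every $w$ the joint law of $(X^n(w),Y^n(w),S(w),Z^n,\hat{X}^n)$ under $P_{W\mathbf{T}}$ given $W=w$ is the same distribution $P_{X^nY^nSZ^n\hat{X}^n}$; all $P$'s below ($P_{Y^n},P_{Z^n|Y^n},P_{X^n|Y^nZ^n},P_{X^nY^n|SZ^n},P_{Y^nZ^n},P_{Z^n|S}$) are induced by it. Let $Q_{Y^n},Q_{Z^n|SY^n},Q_{X^n|SY^nZ^n},Q_{X^nY^n|SZ^n\hat{X}^n},Q_{Y^nZ^n|S},Q_{Z^n}$ be arbitrary distributions and $\eta>0$. For $w\in\{1,\ldots,M\}$ define the sets of $\mathbf{t}$: $\mathcal{A}_1(w):\ \frac{1}{n}\log\frac{P_{Y^n}(y^n(w))}{Q_{Y^n}(y^n(w))}\geq -\eta$; $\mathcal{A}_2(w):\ \frac{1}{n}\log\frac{P_{Z^n|Y^n}(z^n|y^n(w))}{Q_{Z^n|SY^n}(z^n|s(w),y^n(w))}\geq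 -\eta$; $\mathcal{A}_3(w):\ \frac{1}{n}\log\frac{P_{X^n|Y^nZ^n}(x^n(w)|y^n(w),z^n)}{Q_{X^n|SY^nZ^n}(x^n(w)|s(w),y^n(w),z^n)}\geq -\eta$; $\mathcal{A}_4(w):\ \frac{1}{n}\log\frac{P_{X^nY^n|SZ^n}(x^n(w),y^n(w)|s(w),z^n)}{Q_{X^nY^n|SZ^n\hat{X}^n}(x^n(w),y^n(w)|s(w),z^n,\hat{x}^n)}\geq -\eta$; $\mathcal{A}_5(w):\ R^{\mathrm{c}}\geq \frac{1}{n}\log \frac{Q_{Y^nZ^n|S}(y^n(w),z^n|s(w))}{P_{Y^nZ^n}(y^n(w),z^n)}-\eta$; $\mathcal{A}_6(w):\ R^{\mathrm{i}}\leq \frac{1}{n}\log\frac{P_{Z^n|S}(z^n|s(w))}{Q_{Z^n}(z^n)}+\eta$; $\mathcal{A}_7(w):\ d(x^n(w),\hat{x}^n)\leq D$. *)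

From mathcomp Require Import all_boot all_order all_algebra.
From mathcomp Require Import all_classical all_reals all_analysis.
Set Implicit Arguments. Unset Strict Implicit. Unset Printing Implicit Defensive.
Import Order.TTheory GRing.Theory Num.Theory.
Local Open Scope ring_scope.

Notation vec n T := {ffun 'I_n -> T}.

Section Model.
Variable R : realType.

Definition is_pmf (T : finType) (P : T -> R) : Prop :=
  (forall t, 0 <= P t) /\ \sum_t P t = 1.

Definition is_cond_pmf (A B : finType) (Q : A -> B -> R) : Prop :=
  forall a, is_pmf (Q a).

Variables (X Y Z Xh : finType).

Definition iid_n (n : nat) (P : X -> R) (x : vec n X) : R := \prod_i P (x i).

Definition dmc_n (A B : finType) (n : nat) (W : A -> B -> R)
  (a : vec n A) (b : vec n B) : R := \prod_i W (a i) (b i).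

Definition distn (n : nat) (d : X -> Xh -> R) (x : vec n X) (xh : vec n Xh) : R :=
  n%:R^-1 * \sum_i d (x i) (xh i).

Variables (n M L : nat) (PX : X -> R) (PYX : X -> Y -> R) (PZX : X -> Z -> R).
Variables (f : vec n Y -> 'I_L) (h : 'I_L -> vec n Z -> vec n Xh).

Definition Pjoint (x : vec n X) (y : vec n Y) (s : 'I_L) (z : vec n Z)
  (xh : vec n Xh) : R :=
  iid_n PX x * dmc_n PYX x y * (s == f y)%:R * dmc_n PZX x z * (xh == h s z)%:R.

Definition P_Y (y : vec n Y) : R :=
  \sum_x \sum_s \sum_z \sum_xh Pjoint x y s z xh.
Definition P_YZ (y : vec n Y) (z : vec n Z) : R :=
  \sum_x \sum_s \sum_xh Pjoint x y s z xh.
Definition P_XYZ (x : vec n X) (y : vec n Y) (z : vec n Z) : R :=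
  \sum_s \sum_xh Pjoint x y s z xh.
Definition P_XYSZ (x : vec n X) (y : vec n Y) (s : 'I_L) (z : vec n Z) : R :=
  \sum_xh Pjoint x y s z xh.
Definition P_SZ (s : 'I_L) (z : vec n Z) : R :=
  \sum_x \sum_y \sum_xh Pjoint x y s z xh.
Definition P_S (s : 'I_L) : R :=
  \sum_x \sum_y \sum_z \sum_xh Pjoint x y s z xh.

Definition P_Z_Y (z : vec n Z) (y : vec n Y) : R := P_YZ y z / P_Y y.
Definition P_X_YZ (x : vec n X) (y : vec n Y) (z : vec n Z) : R :=
  P_XYZ x y z / P_YZ y z.
Definition P_XY_SZ (x : vec n X) (y : vec n Y) (s : 'I_L) (z : vec n Z) : R :=
  P_XYSZ x y s z / P_SZ s z.
Definition P_Z_S (z : vec n Z) (s : 'I_L) : R := P_SZ s z / P_S s.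

Definition PWT (w : 'I_M) (xs : {ffun 'I_M -> vec n X}) (ys : {ffun 'I_M -> vec n Y})
  (ss : {ffun 'I_M -> 'I_L}) (z : vec n Z) (xh : vec n Xh) : R :=
  M%:R^-1 *
  (\prod_m (iid_n PX (xs m) * dmc_n PYX (xs m) (ys m) * (ss m == f (ys m))%:R)) *
  dmc_n PZX (xs w) z * (xh == h (ss w) z)%:R.

Definition PWT_prob
  (E : 'I_M -> {ffun 'I_M -> vec n X} -> {ffun 'I_M -> vec n Y} ->
       {ffun 'I_M -> 'I_L} -> vec n Z -> vec n Xh -> bool) : R :=
  \sum_w \sum_xs \sum_ys \sum_ss \sum_z \sum_xh
    PWT w xs ys ss z xh * (E w xs ys ss z xh)%:R.

Definition Pc (g : {ffun 'I_M -> 'I_L} -> vec n Z -> 'I_M) (d : X -> Xh -> R)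
  (D : R) : R :=
  \sum_w \sum_(xs : {ffun 'I_M -> vec n X}) \sum_(ys : {ffun 'I_M -> vec n Y})
    \sum_(z : vec n Z)
    let ss := [ffun m => f (ys m)] in
    let wh := g ss z in
    M%:R^-1 * (\prod_m (iid_n PX (xs m) * dmc_n PYX (xs m) (ys m))) *
    dmc_n PZX (xs w) z *
    ((wh == w) && (distn d (xs w) (h (ss wh) z) <= D))%:R.

(* Auxiliary distributions Q and the events A_1(w), ..., A_7(w).
   Each condition (1/n) log (P/Q) >= -eta is written in the equivalent
   log-free form P >= exp(-n eta) Q. *)
Variables (QY : vec n Y -> R)
          (QZ_SY : 'I_L -> vec n Y -> vec n Z -> R)
          (QX_SYZ : 'I_L -> vec n Y -> vec n Z -> vec n X -> R)
          (QXY_SZXh : 'I_L -> vec n Z -> vec n Xh -> (vec n X * vec n Y) -> R)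
          (QYZ_S : 'I_L -> (vec n Y * vec n Z) -> R)
          (QZ : vec n Z -> R)
          (eta Rc Ri : R) (d : X -> Xh -> R) (D : R).

Definition A_all (w : 'I_M) (xs : {ffun 'I_M -> vec n X}) (ys : {ffun 'I_M -> vec n Y})
  (ss : {ffun 'I_M -> 'I_L}) (z : vec n Z) (xh : vec n Xh) : bool :=
  let x := xs w in let y := ys w in let s := ss w in
  let e := expR (- (n%:R * eta)) in
  [&& e * QY y <= P_Y y,
      e * QZ_SY s y z <= P_Z_Y z y,
      e * QX_SYZ s y z x <= P_X_YZ x y z,
      e * QXY_SZXh s z xh (x, y) <= P_XY_SZ x y s z,
      QYZ_S s (y, z) <= expR (n%:R * (Rc + eta)) * P_YZ y z,
      expR (n%:R * (Ri - eta)) * QZ z <= P_Z_S z s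
    & distn d x xh <= D].

End Model.

From mathcomp Require Import all_boot all_order all_algebra.
From mathcomp Require Import all_classical all_reals all_analysis.
From mathcomp Require Import ring.

(* Split the event {What = W, d(X^n(W), Xhat^n) <= D} into the typical event
   A_1(W) /\ ... /\ A_7(W) and an atypical remainder.  The failure of A_i(W),
   i <= 5, only involves the W-th codeword (X^n(W), Y^n(W), S(W), Z^n, Xhat^n),
   whose law under P_WT is the single-codeword law P_{X^n Y^n S Z^n Xhat^n};
   each such event is small by a change of measure, P{P < c Q} <= c, with
   c = e^{-n eta}; for A_5 summing Q over the L labels costs L <= e^{n R^c}.
   The failure of A_6 only matters when the decoder outputs W: for fixed labels
   and Z^n exactly one index is decoded, so summing over W costs one copy of Q_Z,
   and the uniform prior of W contributes 1/M <= e^{-n R^i}. *)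

Set Implicit Arguments.
Unset Strict Implicit.
Unset Printing Implicit Defensive.

Import Order.TTheory GRing.Theory Num.Theory.
Local Open Scope ring_scope.

Section BigSums.
Variable R : comNzRingType.

Lemma sumr_pred1_mull (A : finType) (a : A) (F : A -> R) :
  \sum_x (x == a)%:R * F x = F a.
Proof.
under eq_bigr do rewrite mulr_natl mulrb.
by rewrite -big_mkcond big_pred1_eq.
Qed.

Lemma sumr_pred1_mulr (A : finType) (a : A) (F : A -> R) :
  \sum_x F x * (x == a)%:R = F a.
Proof. by under eq_bigr do rewrite mulrC; exact: sumr_pred1_mull. Qed.

Lemma exchange_big3 (A B C : finType) (F : A -> B -> C -> R) :
  \sum_a \sum_b \sum_c F a b c = \sum_c \sum_a \sum_b F a b c.
Proof. by under eq_bigr do rewrite exchange_big; rewrite exchange_big. Qed.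

Lemma sum_ffun_prodD1 (I A : finType) (w : I) (F : I -> A -> R) (G : A -> R) :
  \sum_(xs : {ffun I -> A}) (\prod_(m | m != w) F m (xs m)) * G (xs w) =
  (\prod_(m | m != w) \sum_a F m a) * \sum_a G a.
Proof.
pose H m a := if m == w then G a else F m a.
have H_neq m : m != w -> H m = F m by rewrite /H => /negbTE ->.
transitivity (\sum_(xs : {ffun I -> A}) \prod_m H m (xs m)).
  apply: eq_bigr => xs _; rewrite [RHS](bigD1 w) //= {1}/H eqxx mulrC.
  by congr (_ * _); apply: eq_bigr => m /H_neq ->.
rewrite -(bigA_distr_bigA H) (bigD1 w) //= {1}/H eqxx mulrC.
by congr (_ * _); apply: eq_bigr => m /H_neq ->.
Qed.

Lemma prod_mul_natr_eq_ffun (I A : finType) (a : I -> R) (ss : {ffun I -> A})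
    (c : I -> A) :
  \prod_m (a m * (ss m == c m)%:R) = (\prod_m a m) * (ss == finfun c)%:R.
Proof.
rewrite big_split /=; congr (_ * _).
have [->|neq] := eqVneq ss (finfun c).
  by apply: big1 => m _; rewrite ffunE eqxx.
have /existsP[m ne_m] : [exists m, ss m != c m].
  rewrite -negb_forall; apply: contra neq => /forallP eq_ss.
  by apply/eqP/ffunP => m; rewrite ffunE; apply/eqP.
by rewrite (bigD1 m) //= (negbTE ne_m) mul0r.
Qed.

End BigSums.

Lemma ler_term_sum (R : numDomainType) (T : finType) (F : T -> R) (t : T) :
  (forall u, 0 <= F u) -> F t <= \sum_u F u.
Proof. by move=> F_ge0; rewrite (bigD1 t) //= lerDl sumr_ge0. Qed.

Section IndicatorMarkov.
Variable R : realFieldType.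

Lemma indicator_markov (a c : R) : 0 <= c -> a * (~~ (c <= a))%:R <= c.
Proof. by move=> c_ge0; case: (leP c a) => [_|/ltW]; rewrite ?mulr0 ?mulr1. Qed.

Lemma indicator_markov_ratio (a b c : R) :
  0 <= a <= b -> 0 <= c -> a * (~~ (c <= a / b))%:R <= c * b.
Proof.
move=> /andP[a_ge0 a_le_b] c_ge0; have [b0|b_neq0] := eqVneq b 0.
  have -> : a = 0 by apply/le_anti; rewrite a_ge0 -b0 a_le_b.
  by rewrite b0 !mul0r mulr0.
have b_gt0 : 0 < b by rewrite lt_def b_neq0 (le_trans a_ge0 a_le_b).
rewrite -[a in a * _](divfK b_neq0) mulrAC mulrC [c * b]mulrC ler_pM2l //.
exact: indicator_markov.
Qed.

Lemma indicator_markov_scale (a q k : R) :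
  0 <= q -> 0 < k -> a * (~~ (q <= k * a))%:R <= q / k.
Proof.
move=> q_ge0 k_gt0; rewrite -[q <= _]ler_pdivrMl // [q / k]mulrC.
by apply: indicator_markov; rewrite mulr_ge0 // invr_ge0 ltW.
Qed.

End IndicatorMarkov.

Section RateBounds.
Variable R : realType.

Lemma card_div_expR_le (k a r eta : R) :
  0 < k -> 0 < a -> k^-1 * ln a <= r ->
  a / expR (k * (r + eta)) <= expR (- (k * eta)).
Proof.
move=> k_gt0 a_gt0; rewrite ler_pdivrMl // => ln_a_le.
have a_le : a <= expR (k * r) by rewrite -[a]lnK ?posrE // ler_expR.
rewrite mulrDr expRD expRN invfM mulrA ler_piMl ?invr_ge0 ?expR_ge0 //.
by rewrite ler_pdivrMr ?expR_gt0 // mul1r.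
Qed.

Lemma expR_div_card_le (k a r eta : R) :
  0 < k -> 0 < a -> r <= k^-1 * ln a ->
  a^-1 * expR (k * (r - eta)) <= expR (- (k * eta)).
Proof.
move=> k_gt0 a_gt0; rewrite ler_pdivlMl // => ln_a_ge.
have le_a : expR (k * r) <= a by rewrite -[a]lnK ?posrE // ler_expR.
rewrite mulrBr expRD mulrA ler_piMl ?expR_ge0 //.
by rewrite ler_pdivrMl // mulr1.
Qed.

End RateBounds.

Section ProductDistributions.
Variables (R : realType) (A B : finType) (n : nat).

Lemma iid_n_ge0 (P : A -> R) (a : vec n A) : is_pmf P -> 0 <= iid_n P a.
Proof. by case=> P_ge0 _; apply: prodr_ge0 => i _. Qed.

Lemma iid_n_sum1 (P : A -> R) : is_pmf P -> \sum_(a : vec n A) iid_n P a = 1.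
Proof.
case=> _ P_sum1; rewrite /iid_n -(bigA_distr_bigA (fun _ b => P b)).
exact: big1.
Qed.

Lemma dmc_n_ge0 (W : A -> B -> R) (a : vec n A) (b : vec n B) :
  is_cond_pmf W -> 0 <= dmc_n W a b.
Proof. by move=> W_pmf; apply: prodr_ge0 => i _; case: (W_pmf (a i)). Qed.

Lemma dmc_n_sum1 (W : A -> B -> R) (a : vec n A) :
  is_cond_pmf W -> \sum_(b : vec n B) dmc_n W a b = 1.
Proof.
move=> W_pmf; rewrite /dmc_n -(bigA_distr_bigA (fun i b => W (a i) b)).
by apply: big1 => i _; case: (W_pmf (a i)).
Qed.

End ProductDistributions.

Section Model.
Variables (R : realType) (X Y Z Xh : finType) (n M L : nat).
Variables (PX : X -> R) (PYX : X -> Y -> R) (PZX : X -> Z -> R).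
Variables (f : vec n Y -> 'I_L) (h : 'I_L -> vec n Z -> vec n Xh).
Hypotheses (PX_pmf : is_pmf PX) (PYX_pmf : is_cond_pmf PYX)
  (PZX_pmf : is_cond_pmf PZX).

Local Notation Pj := (Pjoint PX PYX PZX f h).
Local Notation Pxyz := (P_XYZ PX PYX PZX f h).
Local Notation Pyz := (P_YZ PX PYX PZX f h).
Local Notation Py := (P_Y PX PYX PZX f h).
Local Notation Pxysz := (P_XYSZ PX PYX PZX f h).
Local Notation Psz := (P_SZ PX PYX PZX f h).
Local Notation Ps := (P_S PX PYX PZX f h).
Local Notation Pz_y := (P_Z_Y PX PYX PZX f h).
Local Notation Px_yz := (P_X_YZ PX PYX PZX f h).
Local Notation Pxy_sz := (P_XY_SZ PX PYX PZX f h).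
Local Notation Pz_s := (P_Z_S PX PYX PZX f h).
Local Notation Pwt := (PWT (M:=M) PX PYX PZX f h).
Local Notation Pwt_prob := (PWT_prob (M:=M) PX PYX PZX f h).
Local Notation P_XYS x y s := (iid_n PX x * dmc_n PYX x y * (s == f y)%:R).
Local Notation event := ('I_M -> {ffun 'I_M -> vec n X} ->
  {ffun 'I_M -> vec n Y} -> {ffun 'I_M -> 'I_L} -> vec n Z -> vec n Xh -> bool).

Lemma Pjoint_E x y s z xh :
  Pj x y s z xh = (s == f y)%:R * ((xh == h s z)%:R *
                    (iid_n PX x * dmc_n PYX x y * dmc_n PZX x z)).
Proof. by rewrite /Pjoint; ring. Qed.

Lemma P_XYZ_E x y z :
  Pxyz x y z = iid_n PX x * dmc_n PYX x y * dmc_n PZX x z.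
Proof.
rewrite /P_XYZ.
under eq_bigr => s _ do under eq_bigr => xh _ do rewrite Pjoint_E.
under eq_bigr => s _ do rewrite -mulr_sumr sumr_pred1_mull.
exact: sumr_pred1_mull.
Qed.

Lemma Pjoint_P_XYZ x y s z xh :
  Pj x y s z xh = (s == f y)%:R * ((xh == h s z)%:R * Pxyz x y z).
Proof. by rewrite Pjoint_E P_XYZ_E. Qed.

Lemma P_XYZ_ge0 x y z : 0 <= Pxyz x y z.
Proof. by rewrite P_XYZ_E !mulr_ge0 ?iid_n_ge0 ?dmc_n_ge0. Qed.

Lemma Pjoint_ge0 x y s z xh : 0 <= Pj x y s z xh.
Proof. by rewrite Pjoint_P_XYZ !mulr_ge0 ?P_XYZ_ge0. Qed.

Lemma P_XYZ_sum1 : \sum_x \sum_y \sum_z Pxyz x y z = 1.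
Proof.
under eq_bigr => x _ do under eq_bigr => y _ do
  rewrite (eq_bigr _ (fun z _ => P_XYZ_E x y z)) -mulr_sumr dmc_n_sum1 // mulr1.
under eq_bigr => x _ do rewrite -mulr_sumr dmc_n_sum1 // mulr1.
exact: iid_n_sum1.
Qed.

Lemma P_YZ_sum1 : \sum_y \sum_z Pyz y z = 1.
Proof. by rewrite -P_XYZ_sum1 -(exchange_big3 (fun y z x => Pxyz x y z)). Qed.

Lemma P_Y_E y : Py y = \sum_z Pyz y z.
Proof.
by rewrite /P_Y; under eq_bigr do rewrite exchange_big; rewrite exchange_big.
Qed.

Lemma P_Y_sum1 : \sum_y Py y = 1.
Proof. by under eq_bigr do rewrite P_Y_E; exact: P_YZ_sum1. Qed.

Lemma P_XYSZ_E x y s z : Pxysz x y s z = (s == f y)%:R * Pxyz x y z.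
Proof.
rewrite /P_XYSZ; under eq_bigr do rewrite Pjoint_P_XYZ.
by rewrite -mulr_sumr sumr_pred1_mull.
Qed.

Lemma P_S_E s : Ps s = \sum_z Psz s z.
Proof. by rewrite /P_S /P_SZ exchange_big3. Qed.

Lemma P_S_E_XYS s :
  Ps s = \sum_x \sum_y P_XYS x y s.
Proof.
apply: eq_bigr => x _; apply: eq_bigr => y _.
under eq_bigr => z _ do rewrite sumr_pred1_mulr.
by rewrite -mulr_sumr dmc_n_sum1 ?mulr1.
Qed.

Lemma P_S_sum1 : \sum_s Ps s = 1.
Proof.
under eq_bigr do rewrite P_S_E_XYS.
rewrite -(exchange_big3 (fun x y s => P_XYS x y s)).
under eq_bigr => x _ do under eq_bigr => y _ do rewrite sumr_pred1_mulr.
under eq_bigr => x _ do rewrite -mulr_sumr dmc_n_sum1 // mulr1.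
exact: iid_n_sum1.
Qed.

Lemma P_SZ_sum1 : \sum_z \sum_s Psz s z = 1.
Proof.
by rewrite exchange_big -P_S_sum1; apply: eq_bigr => s _; rewrite P_S_E.
Qed.

Lemma P_YZ_ge0 y z : 0 <= Pyz y z.
Proof. by apply: sumr_ge0 => x _; apply: P_XYZ_ge0. Qed.

Lemma P_XYSZ_ge0 x y s z : 0 <= Pxysz x y s z.
Proof. by rewrite P_XYSZ_E mulr_ge0 ?P_XYZ_ge0. Qed.

Lemma P_SZ_ge0 s z : 0 <= Psz s z.
Proof.
by apply: sumr_ge0 => x _; apply: sumr_ge0 => y _; apply: P_XYSZ_ge0.
Qed.

Lemma P_XYZ_le_P_YZ x y z : Pxyz x y z <= Pyz y z.
Proof.
by apply: (ler_term_sum (F := fun x' => Pxyz x' y z)) => x'; apply: P_XYZ_ge0.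
Qed.

Lemma P_YZ_le_P_Y y z : Pyz y z <= Py y.
Proof. by rewrite P_Y_E; apply: ler_term_sum => z'; apply: P_YZ_ge0. Qed.

Lemma P_XYZ_le_P_SZ x y z : Pxyz x y z <= Psz (f y) z.
Proof.
have -> : Pxyz x y z = Pxysz x y (f y) z by rewrite P_XYSZ_E eqxx mul1r.
apply: le_trans (ler_term_sum (F := fun y' => Pxysz x y' (f y) z) y _) _.
  by move=> y'; apply: P_XYSZ_ge0.
apply: (ler_term_sum (F := fun x' => \sum_y' Pxysz x' y' (f y) z)) => x'.
by apply: sumr_ge0 => y' _; apply: P_XYSZ_ge0.
Qed.

Lemma P_S_ge0 s : 0 <= Ps s.
Proof. by rewrite P_S_E; apply: sumr_ge0 => z _; apply: P_SZ_ge0. Qed.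

Lemma P_SZ_le_P_S s z : Psz s z <= Ps s.
Proof.
by rewrite P_S_E; apply: (ler_term_sum (F := Psz s)) => z'; apply: P_SZ_ge0.
Qed.

Definition Pjoint_prob
    (E : vec n X -> vec n Y -> 'I_L -> vec n Z -> vec n Xh -> bool) : R :=
  \sum_x \sum_y \sum_s \sum_z \sum_xh Pj x y s z xh * (E x y s z xh)%:R.

Lemma sum_Pjoint x y (F : 'I_L -> vec n Z -> vec n Xh -> R) :
  \sum_s \sum_z \sum_xh Pj x y s z xh * F s z xh =
  \sum_z Pxyz x y z * F (f y) z (h (f y) z).
Proof.
under eq_bigr => s _ do under eq_bigr => z _ do under eq_bigr => xh _ do
  rewrite Pjoint_P_XYZ -!mulrA.
under eq_bigr => s _ do under eq_bigr => z _ do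
  rewrite -mulr_sumr sumr_pred1_mull.
by under eq_bigr => s _ do rewrite -mulr_sumr; rewrite sumr_pred1_mull.
Qed.

Lemma Pjoint_probE E :
  Pjoint_prob E =
  \sum_x \sum_y \sum_z Pxyz x y z * (E x y (f y) z (h (f y) z))%:R.
Proof.
apply: eq_bigr => x _; apply: eq_bigr => y _.
exact: (sum_Pjoint x y (fun s z xh => (E x y s z xh)%:R)).
Qed.

Lemma sum_Pjoint_SZ s (F : vec n Z -> R) :
  \sum_x \sum_y \sum_z \sum_xh Pj x y s z xh * F z = \sum_z Psz s z * F z.
Proof.
rewrite exchange_big3; apply: eq_bigr => z _; rewrite /P_SZ mulr_suml.
apply: eq_bigr => x _; rewrite mulr_suml; apply: eq_bigr => y _.
by rewrite mulr_suml.
Qed.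

Lemma sum_P_XYZ_YZ (F : vec n Y -> vec n Z -> R) :
  \sum_x \sum_y \sum_z Pxyz x y z * F y z = \sum_y \sum_z Pyz y z * F y z.
Proof.
rewrite -(exchange_big3 (fun y z x => Pxyz x y z * F y z)).
by apply: eq_bigr => y _; apply: eq_bigr => z _; rewrite -mulr_suml.
Qed.

Lemma Pjoint_prob_orb
    (E1 E2 : vec n X -> vec n Y -> 'I_L -> vec n Z -> vec n Xh -> bool) :
  Pjoint_prob (fun x y s z xh => E1 x y s z xh || E2 x y s z xh)
  <= Pjoint_prob E1 + Pjoint_prob E2.
Proof.
rewrite /Pjoint_prob.
do 5!(rewrite -big_split; apply: ler_sum => ? _).
rewrite /= -mulrDr; apply: ler_wpM2l; first exact: Pjoint_ge0.
by rewrite -natrD ler_nat; case: (E1 _ _ _ _ _); case: (E2 _ _ _ _ _).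
Qed.

Lemma Pjoint_prob_P_Y_lt (Q : vec n Y -> R) (e : R) :
  is_pmf Q -> 0 <= e ->
  Pjoint_prob (fun x y s z xh => ~~ (e * Q y <= Py y)) <= e.
Proof.
case=> Q_ge0 Q_sum1 e_ge0; rewrite Pjoint_probE sum_P_XYZ_YZ.
apply: (@le_trans _ _ (\sum_y e * Q y)).
  apply: ler_sum => y _; rewrite -mulr_suml -P_Y_E.
  by apply: indicator_markov; rewrite mulr_ge0.
by rewrite -mulr_sumr Q_sum1 mulr1.
Qed.

Lemma Pjoint_prob_P_Z_Y_lt (Q : 'I_L -> vec n Y -> vec n Z -> R) (e : R) :
  (forall s, is_cond_pmf (Q s)) -> 0 <= e ->
  Pjoint_prob (fun x y s z xh => ~~ (e * Q s y z <= Pz_y z y)) <= e.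
Proof.
move=> Q_pmf e_ge0; rewrite Pjoint_probE sum_P_XYZ_YZ.
apply: (@le_trans _ _ (\sum_y e * Py y)).
  apply: ler_sum => y _; have [Q_ge0 Q_sum1] := Q_pmf (f y) y.
  apply: (@le_trans _ _ (\sum_z e * Q (f y) y z * Py y)).
    apply: ler_sum => z _; apply: indicator_markov_ratio; last exact: mulr_ge0.
    by rewrite P_YZ_ge0 P_YZ_le_P_Y.
  by rewrite -mulr_suml -mulr_sumr Q_sum1 mulr1.
by rewrite -mulr_sumr P_Y_sum1 mulr1.
Qed.

Lemma Pjoint_prob_P_X_YZ_lt (Q : 'I_L -> vec n Y -> vec n Z -> vec n X -> R)
    (e : R) :
  (forall s y, is_cond_pmf (Q s y)) -> 0 <= e ->
  Pjoint_prob (fun x y s z xh => ~~ (e * Q s y z x <= Px_yz x y z)) <= e.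
Proof.
move=> Q_pmf e_ge0; rewrite Pjoint_probE.
apply: (@le_trans _ _ (\sum_x \sum_y \sum_z e * Q (f y) y z x * Pyz y z)).
  apply: ler_sum => x _; apply: ler_sum => y _; apply: ler_sum => z _.
  apply: indicator_markov_ratio; first by rewrite P_XYZ_ge0 P_XYZ_le_P_YZ.
  by rewrite mulr_ge0 //; case: (Q_pmf (f y) y z).
rewrite -(exchange_big3 (fun y z x => e * Q (f y) y z x * Pyz y z)).
rewrite -[leRHS]mulr1 -P_YZ_sum1 mulr_sumr; apply: ler_sum => y _.
rewrite mulr_sumr; apply: ler_sum => z _; have [_ Q_sum1] := Q_pmf (f y) y z.
by rewrite -mulr_suml -mulr_sumr Q_sum1 mulr1 mulrC.
Qed.

Lemma Pjoint_prob_P_XY_SZ_lt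
    (Q : 'I_L -> vec n Z -> vec n Xh -> vec n X * vec n Y -> R) (e : R) :
  (forall s z, is_cond_pmf (Q s z)) -> 0 <= e ->
  Pjoint_prob (fun x y s z xh => ~~ (e * Q s z xh (x, y) <= Pxy_sz x y s z))
  <= e.
Proof.
move=> Q_pmf e_ge0; rewrite Pjoint_probE.
pose T s z x y := e * Q s z (h s z) (x, y) * Psz s z.
have T_ge0 z x y s : 0 <= T s z x y.
  by rewrite !mulr_ge0 ?P_SZ_ge0 //; case: (Q_pmf s z (h s z)).
apply: (@le_trans _ _ (\sum_x \sum_y \sum_z \sum_s T s z x y)).
  apply: ler_sum => x _; apply: ler_sum => y _; apply: ler_sum => z _.
  apply: le_trans _
    (ler_term_sum (F := fun s => T s z x y) (f y) (T_ge0 z x y)).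
  rewrite /T /P_XY_SZ P_XYSZ_E eqxx mul1r; apply: indicator_markov_ratio.
    by rewrite P_XYZ_ge0 P_XYZ_le_P_SZ.
  by rewrite mulr_ge0 //; case: (Q_pmf (f y) z (h (f y) z)).
rewrite (exchange_big3 (fun x y z => \sum_s T s z x y)).
under eq_bigr => z _ do rewrite (exchange_big3 (fun x y s => T s z x y)).
rewrite -[leRHS]mulr1 -P_SZ_sum1 mulr_sumr; apply: ler_sum => z _.
rewrite mulr_sumr; apply: ler_sum => s _.
have [_ Q_sum1] := Q_pmf s z (h s z).
under eq_bigr => x _ do rewrite -mulr_suml -mulr_sumr.
rewrite -mulr_suml -mulr_sumr pair_bigA /=.
rewrite (eq_bigr (fun p => Q s z (h s z) p)) => [|[] //].
by rewrite Q_sum1 mulr1 mulrC.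
Qed.

Lemma Pjoint_prob_P_YZ_lt (Q : 'I_L -> vec n Y * vec n Z -> R) (k : R) :
  is_cond_pmf Q -> 0 < k ->
  Pjoint_prob (fun x y s z xh => ~~ (Q s (y, z) <= k * Pyz y z)) <= L%:R / k.
Proof.
move=> Q_pmf k_gt0; rewrite Pjoint_probE sum_P_XYZ_YZ.
have Q_ge0 s p : 0 <= Q s p by case: (Q_pmf s).
apply: (@le_trans _ _ (\sum_y \sum_z \sum_s Q s (y, z) / k)).
  apply: ler_sum => y _; apply: ler_sum => z _.
  apply: le_trans (indicator_markov_scale _ (Q_ge0 _ _) k_gt0) _.
  rewrite -mulr_suml; apply: ler_wpM2r; first by rewrite invr_ge0 ltW.
  by apply: (ler_term_sum (F := fun s => Q s (y, z))) => s; apply: Q_ge0.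
rewrite (exchange_big3 (fun y z s => Q s (y, z) / k)).
under eq_bigr => s _ do under eq_bigr => y _ do rewrite -mulr_suml.
under eq_bigr => s _ do rewrite -mulr_suml pair_bigA /=.
rewrite -mulr_suml; apply: ler_wpM2r; first by rewrite invr_ge0 ltW.
have -> : (L%:R : R) = \sum_(s < L) 1 by rewrite sumr_const card_ord.
apply: ler_sum => s _; have [_ Q_sum1] := Q_pmf s.
by rewrite (eq_bigr (Q s)) => [|[] //]; rewrite Q_sum1.
Qed.

Lemma PWT_E w xs ys ss z xh :
  Pwt w xs ys ss z xh =
  M%:R^-1 * (\prod_(m | m != w) P_XYS (xs m) (ys m) (ss m)) *
  Pj (xs w) (ys w) (ss w) z xh.
Proof. by rewrite /PWT (bigD1 w) //= /Pjoint; ring. Qed.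

Lemma PWT_ge0 w xs ys ss z xh : 0 <= Pwt w xs ys ss z xh.
Proof.
rewrite PWT_E mulr_ge0 ?Pjoint_ge0 // mulr_ge0 ?invr_ge0 ?ler0n //.
by apply: prodr_ge0 => m _; rewrite !mulr_ge0 ?iid_n_ge0 ?dmc_n_ge0.
Qed.

Lemma PWT_prob_marginal
    (E : 'I_M -> {ffun 'I_M -> 'I_L} -> vec n X -> vec n Y -> vec n Z ->
         vec n Xh -> bool) :
  Pwt_prob (fun w xs ys ss z xh => E w ss (xs w) (ys w) z xh) =
  \sum_w \sum_(ss : {ffun 'I_M -> 'I_L})
    M%:R^-1 * (\prod_(m | m != w) Ps (ss m)) *
    \sum_x \sum_y \sum_z \sum_xh Pj x y (ss w) z xh * (E w ss x y z xh)%:R.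
Proof.
rewrite /PWT_prob; apply: eq_bigr => w _; rewrite exchange_big3.
apply: eq_bigr => ss _.
pose G x y := \sum_z \sum_xh Pj x y (ss w) z xh * (E w ss x y z xh)%:R.
transitivity (M%:R^-1 * \sum_(xs : {ffun 'I_M -> vec n X})
    \sum_(ys : {ffun 'I_M -> vec n Y})
    (\prod_(m | m != w) P_XYS (xs m) (ys m) (ss m)) * G (xs w) (ys w)).
  rewrite mulr_sumr; apply: eq_bigr => xs _; rewrite mulr_sumr.
  apply: eq_bigr => ys _; rewrite /G 2!mulr_sumr; apply: eq_bigr => z _.
  by rewrite 2!mulr_sumr; apply: eq_bigr => xh _; rewrite PWT_E !mulrA.
rewrite -mulrA; congr (_ * _).
rewrite (eq_bigr _ (fun (xs : {ffun 'I_M -> vec n X}) _ =>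
  sum_ffun_prodD1 w (fun m b => P_XYS (xs m) b (ss m)) (G (xs w)))).
rewrite (sum_ffun_prodD1 w (fun m a => \sum_b P_XYS a b (ss m))
                           (fun a => \sum_b G a b)).
by under eq_bigr => m _ do rewrite -P_S_E_XYS.
Qed.

Lemma PWT_prob_codeword
    (E : vec n X -> vec n Y -> 'I_L -> vec n Z -> vec n Xh -> bool) :
  (0 < M)%N ->
  Pwt_prob (fun w xs ys ss z xh => E (xs w) (ys w) (ss w) z xh) =
  Pjoint_prob E.
Proof.
move=> M_gt0.
rewrite (PWT_prob_marginal (fun w ss x y z xh => E x y (ss w) z xh)).
pose G s := \sum_x \sum_y \sum_z \sum_xh Pj x y s z xh * (E x y s z xh)%:R.
transitivity (\sum_(w < M) M%:R^-1 * \sum_s G s).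
  apply: eq_bigr => w _; under eq_bigr do rewrite -mulrA; rewrite -mulr_sumr.
  by rewrite (sum_ffun_prodD1 w (fun _ s => Ps s) G) P_S_sum1 big1_eq mul1r.
rewrite sumr_const card_ord -[(_ * _) *+ M]mulr_natl mulrA mulfV ?mul1r.
  by rewrite /Pjoint_prob [RHS]exchange_big3.
by rewrite pnatr_eq0 -lt0n.
Qed.

Lemma PWT_prob_decoded_P_Z_S_lt (g : {ffun 'I_M -> 'I_L} -> vec n Z -> 'I_M)
    (c : vec n Z -> R) :
  (forall z, 0 <= c z) ->
  Pwt_prob (fun w xs ys ss z xh => (g ss z == w) && ~~ (c z <= Pz_s z (ss w)))
  <= M%:R^-1 * \sum_z c z.
Proof.
move=> c_ge0.
rewrite (PWT_prob_marginal (fun w ss x y z xh =>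
  (g ss z == w) && ~~ (c z <= Pz_s z (ss w)))).
under eq_bigr => w _ do under eq_bigr => ss _ do rewrite sum_Pjoint_SZ.
pose Pss (ss : {ffun 'I_M -> 'I_L}) := \prod_m Ps (ss m).
have Pss_sum1 : \sum_ss Pss ss = 1.
  rewrite /Pss -(bigA_distr_bigA (fun _ s => Ps s)).
  by apply: big1 => m _; apply: P_S_sum1.
(* For fixed [ss] and [z], only the decoded index [w = g ss z] contributes. *)
apply: (@le_trans _ _ (\sum_w \sum_(ss : {ffun 'I_M -> 'I_L}) \sum_z
  M%:R^-1 * (c z * Pss ss) * (w == g ss z)%:R)).
  apply: ler_sum => w _; apply: ler_sum => ss _.
  rewrite mulr_sumr; apply: ler_sum => z _.
  rewrite eq_sym; case: (w == g ss z) => /=; last by rewrite !mulr0.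
  rewrite mulr1n mulr1 -mulrA ler_wpM2l ?invr_ge0 ?ler0n //.
  rewrite /Pss [in leRHS](bigD1 w) //= [leRHS]mulrA [leLHS]mulrC.
  apply: ler_wpM2r; first by apply: prodr_ge0 => m _; apply: P_S_ge0.
  apply: indicator_markov_ratio => //.
  by rewrite P_SZ_ge0 P_SZ_le_P_S.
rewrite -(exchange_big3 (fun ss z w =>
  M%:R^-1 * (c z * Pss ss) * (w == g ss z)%:R)).
under eq_bigr => ss _ do under eq_bigr => z _ do rewrite sumr_pred1_mulr.
rewrite exchange_big mulr_sumr; apply: ler_sum => z _.
by rewrite -mulr_sumr -mulr_sumr Pss_sum1 mulr1.
Qed.

Lemma le_PWT_prob (E E' : event) :
  (forall w xs ys ss z xh, E w xs ys ss z xh -> E' w xs ys ss z xh) ->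
  Pwt_prob E <= Pwt_prob E'.
Proof.
move=> E_sub; rewrite /PWT_prob.
apply: ler_sum => w _; apply: ler_sum => xs _; apply: ler_sum => ys _.
apply: ler_sum => ss _; apply: ler_sum => z _; apply: ler_sum => xh _.
apply: ler_wpM2l; first exact: PWT_ge0.
by case: (E w xs ys ss z xh) (E_sub w xs ys ss z xh) => [->|].
Qed.

Lemma PWT_prob_orb (E1 E2 : event) :
  Pwt_prob (fun w xs ys ss z xh => E1 w xs ys ss z xh || E2 w xs ys ss z xh)
  <= Pwt_prob E1 + Pwt_prob E2.
Proof.
rewrite /PWT_prob.
do 6!(rewrite -big_split; apply: ler_sum => ? _).
rewrite /= -mulrDr; apply: ler_wpM2l; first exact: PWT_ge0.
by rewrite -natrD ler_nat; case: (E1 _ _ _ _ _ _); case: (E2 _ _ _ _ _ _).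
Qed.

Lemma Pc_PWT_prob (g : {ffun 'I_M -> 'I_L} -> vec n Z -> 'I_M)
    (d : X -> Xh -> R) (D : R) :
  Pc PX PYX PZX f h g d D =
  Pwt_prob (fun w xs ys ss z xh => (g ss z == w) && (distn d (xs w) xh <= D)).
Proof.
rewrite /Pc /PWT_prob; apply: eq_bigr => w _; apply: eq_bigr => xs _.
apply: eq_bigr => ys _.
pose s0 := [ffun m => f (ys m)].
pose P := \prod_m (iid_n PX (xs m) * dmc_n PYX (xs m) (ys m)).
transitivity (\sum_(ss : {ffun 'I_M -> 'I_L}) (ss == s0)%:R *
  \sum_z \sum_xh (xh == h (ss w) z)%:R * (M%:R^-1 * P * dmc_n PZX (xs w) z *
     ((g ss z == w) && (distn d (xs w) xh <= D))%:R)); last first.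
  apply: eq_bigr => ss _; rewrite mulr_sumr; apply: eq_bigr => z _.
  rewrite mulr_sumr; apply: eq_bigr => xh _.
  rewrite /PWT (prod_mul_natr_eq_ffun
    (fun m => iid_n PX (xs m) * dmc_n PYX (xs m) (ys m)) ss (f \o ys)).
  by rewrite -/P; ring.
rewrite sumr_pred1_mull; apply: eq_bigr => z _; rewrite sumr_pred1_mull /=.
by have [<-|] := eqVneq (g s0 z) w.
Qed.

Variables (g : {ffun 'I_M -> 'I_L} -> vec n Z -> 'I_M) (d : X -> Xh -> R).
Variables (D Rc Ri eta : R) (QY : vec n Y -> R)
  (QZ_SY : 'I_L -> vec n Y -> vec n Z -> R)
  (QX_SYZ : 'I_L -> vec n Y -> vec n Z -> vec n X -> R)
  (QXY_SZXh : 'I_L -> vec n Z -> vec n Xh -> (vec n X * vec n Y) -> R)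
  (QYZ_S : 'I_L -> (vec n Y * vec n Z) -> R) (QZ : vec n Z -> R).

Local Notation e := (expR (- (n%:R * eta))).

Definition codeword_atypical (x : vec n X) (y : vec n Y) (s : 'I_L)
    (z : vec n Z) (xh : vec n Xh) : bool :=
  [|| ~~ (e * QY y <= Py y), ~~ (e * QZ_SY s y z <= Pz_y z y),
      ~~ (e * QX_SYZ s y z x <= Px_yz x y z),
      ~~ (e * QXY_SZXh s z xh (x, y) <= Pxy_sz x y s z)
    | ~~ (QYZ_S s (y, z) <= expR (n%:R * (Rc + eta)) * Pyz y z)].

Definition atypical : event := fun w xs ys ss z xh =>
  codeword_atypical (xs w) (ys w) (ss w) z xh ||
  (g ss z == w) && ~~ (expR (n%:R * (Ri - eta)) * QZ z <= Pz_s z (ss w)).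

Lemma correct_typical_or_atypical w (xs : {ffun 'I_M -> vec n X})
    (ys : {ffun 'I_M -> vec n Y}) ss z xh :
  (g ss z == w) && (distn d (xs w) xh <= D) ->
  A_all PX PYX PZX f h QY QZ_SY QX_SYZ QXY_SZXh QYZ_S QZ eta Rc Ri d D
    w xs ys ss z xh || atypical w xs ys ss z xh.
Proof.
rewrite /A_all /atypical /codeword_atypical /= => /andP[-> ->].
rewrite !andbT /=.
by do 6!case: (_ <= _).
Qed.

Lemma PWT_prob_correct_le :
  Pwt_prob (fun w xs ys ss z xh => (g ss z == w) && (distn d (xs w) xh <= D)) <=
  Pwt_prob (A_all PX PYX PZX f h QY QZ_SY QX_SYZ QXY_SZXh QYZ_S QZ
              eta Rc Ri d D)
  + Pwt_prob atypical.
Proof.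
apply: le_trans (PWT_prob_orb _ _); apply: le_PWT_prob.
exact: correct_typical_or_atypical.
Qed.

Lemma Pjoint_prob_codeword_atypical_le :
  (0 < n)%N -> (0 < L)%N ->
  is_pmf QY -> (forall s, is_cond_pmf (QZ_SY s)) ->
  (forall s y, is_cond_pmf (QX_SYZ s y)) ->
  (forall s z, is_cond_pmf (QXY_SZXh s z)) -> is_cond_pmf QYZ_S ->
  n%:R^-1 * ln (L%:R : R) <= Rc ->
  Pjoint_prob codeword_atypical <= 5 * e.
Proof.
move=> n_gt0 L_gt0 QY_pmf QZ_SY_pmf QX_SYZ_pmf QXY_SZXh_pmf QYZ_S_pmf rate_L.
have e_ge0 : 0 <= e := expR_ge0 _.
have -> : 5 * e = e + (e + (e + (e + e))) by ring.
apply: le_trans (Pjoint_prob_orb _ _) _; apply: lerD.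
  exact: Pjoint_prob_P_Y_lt.
apply: le_trans (Pjoint_prob_orb _ _) _; apply: lerD.
  exact: Pjoint_prob_P_Z_Y_lt.
apply: le_trans (Pjoint_prob_orb _ _) _; apply: lerD.
  exact: Pjoint_prob_P_X_YZ_lt.
apply: le_trans (Pjoint_prob_orb _ _) _; apply: lerD.
  exact: Pjoint_prob_P_XY_SZ_lt.
apply: le_trans (Pjoint_prob_P_YZ_lt QYZ_S_pmf (expR_gt0 _)) _.
by apply: card_div_expR_le; rewrite ?ltr0n.
Qed.

Lemma PWT_prob_atypical_le :
  (0 < n)%N -> (0 < M)%N -> (0 < L)%N ->
  is_pmf QY -> (forall s, is_cond_pmf (QZ_SY s)) ->
  (forall s y, is_cond_pmf (QX_SYZ s y)) ->
  (forall s z, is_cond_pmf (QXY_SZXh s z)) ->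
  is_cond_pmf QYZ_S -> is_pmf QZ ->
  n%:R^-1 * ln (L%:R : R) <= Rc -> Ri <= n%:R^-1 * ln (M%:R : R) ->
  Pwt_prob atypical <= 6 * e.
Proof.
move=> n_gt0 M_gt0 L_gt0 QY_pmf QZ_SY_pmf QX_SYZ_pmf QXY_SZXh_pmf QYZ_S_pmf
  [QZ_ge0 QZ_sum1] rate_L rate_M.
have -> : 6 * e = 5 * e + e by ring.
apply: le_trans (PWT_prob_orb _ _) _; apply: lerD.
  by rewrite PWT_prob_codeword //; apply: Pjoint_prob_codeword_atypical_le.
apply: le_trans (PWT_prob_decoded_P_Z_S_lt g _) _ => [z|].
  by rewrite mulr_ge0 ?expR_ge0.
rewrite -mulr_sumr QZ_sum1 mulr1.
by apply: expR_div_card_le; rewrite ?ltr0n.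
Qed.

End Model.

Theorem lemma9 (R : realType) (X Y Z Xh : finType) (n M L : nat)
  (PX : X -> R) (PYX : X -> Y -> R) (PZX : X -> Z -> R)
  (d : X -> Xh -> R)
  (f : vec n Y -> 'I_L) (g : {ffun 'I_M -> 'I_L} -> vec n Z -> 'I_M)
  (h : 'I_L -> vec n Z -> vec n Xh) (D Rc Ri eta : R)
  (QY : vec n Y -> R)
  (QZ_SY : 'I_L -> vec n Y -> vec n Z -> R)
  (QX_SYZ : 'I_L -> vec n Y -> vec n Z -> vec n X -> R)
  (QXY_SZXh : 'I_L -> vec n Z -> vec n Xh -> (vec n X * vec n Y) -> R)
  (QYZ_S : 'I_L -> (vec n Y * vec n Z) -> R)
  (QZ : vec n Z -> R) :
  (0 < n)%N -> (0 < M)%N -> (0 < L)%N ->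
  is_pmf PX -> is_cond_pmf PYX -> is_cond_pmf PZX ->
  is_pmf QY ->
  (forall s, is_cond_pmf (QZ_SY s)) ->
  (forall s y, is_cond_pmf (QX_SYZ s y)) ->
  (forall s z, is_cond_pmf (QXY_SZXh s z)) ->
  is_cond_pmf QYZ_S ->
  is_pmf QZ ->
  0 < eta ->
  n%:R^-1 * ln (L%:R : R) <= Rc ->
  n%:R^-1 * ln (M%:R : R) >= Ri ->
  Pc PX PYX PZX f h g d D <=
    PWT_prob (M:=M) PX PYX PZX f h
      (A_all (M:=M) PX PYX PZX f h QY QZ_SY QX_SYZ QXY_SZXh QYZ_S QZ eta Rc Ri d D)
    + 6 * expR (- (n%:R * eta)).
Proof.
move=> n_gt0 M_gt0 L_gt0 PX_pmf PYX_pmf PZX_pmf QY_pmf QZ_SY_pmf QX_SYZ_pmf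
  QXY_SZXh_pmf QYZ_S_pmf QZ_pmf _ rate_L rate_M.
rewrite Pc_PWT_prob.
apply: le_trans (PWT_prob_correct_le f h PX_pmf PYX_pmf PZX_pmf g d D Rc Ri eta
  QY QZ_SY QX_SYZ QXY_SZXh QYZ_S QZ) _.
by rewrite lerD2l; apply: PWT_prob_atypical_le.
Qed.
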